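(* Let $(u,v),(u',v')\in F^2$ with $(u,v)\sim_{AC}(u',v')$, and let $\varphi$ be an endomorphism of $F$ such that $(\varphi(x),\varphi(y))\in\mathcal{B}_2$. Then $(\varphi(u),\varphi(v))\sim_{AC}(\varphi(u'),\varphi(v'))$.
   Context: $F=F(x,y)$ is the free group on $\{x,y\}$. $\mathcal{B}_2$ is the set of pairs $(r_1,r_2)\in F^2$ whose normal closure in $F$ is all of $F$. The Andrews–Curtis (AC) moves on a pair $(r_1,r_2)$ are: replace $r_i$ by $r_ir_j$ ($i\ne j$); replace $r_i$ by $r_i^{-1}$; replace $r_i$ by $w^{-1}r_iw$ for some $w\in F$. Two pairs are AC-equivalent, written $\sim_{AC}$, if one can be obtained from the other by a finite sequence of AC-moves. *)

(* The free group F = F(x,y) on two generators,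
   realised as the set of freely reduced words over {x, y, x^-1, y^-1}. *)
From HB Require Import structures.
From mathcomp Require Import all_boot.
From Stdlib Require Import Relation_Operators.

Set Implicit Arguments.
Unset Strict Implicit.
Unset Printing Implicit Defensive.

(* A letter (g, s): generator g (false = x, true = y), sign s (false = +1, true = -1). *)
Definition letter := (bool * bool)%type.

Definition flip (a : letter) : letter := (a.1, ~~ a.2).

Definition cancels (a b : letter) : bool := (a.1 == b.1) && (a.2 != b.2).

Definition reduced (w : seq letter) : bool :=
  sorted (fun a b => ~~ cancels a b) w.

Definition push (a : letter) (w : seq letter) : seq letter :=
  match w with
  | b :: w' => if cancels a b then w' else a :: w
  | [::] => [:: a]
  end.

Lemma push_reduced a w : reduced w -> reduced (push a w).
Proof.
case: w => [|b w] //= Hw.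
case: ifP => Hc.
  by move: Hw; rewrite /reduced /=; case: w => //= c w /andP[].
by rewrite /reduced /= Hc.
Qed.

Record F := MkF { fval : seq letter; fvalP : reduced fval }.

HB.instance Definition _ := [isSub for fval].
HB.instance Definition _ := [Equality of F by <:].

Definition F_one : F := @MkF [::] isT.

Definition gen_x : F := @MkF [:: (false, false)] isT.
Definition gen_y : F := @MkF [:: (true, false)] isT.

Definition mulw (w1 w2 : seq letter) : seq letter := foldr push w2 w1.

Lemma mulw_reduced w1 w2 : reduced w2 -> reduced (mulw w1 w2).
Proof. by move=> H; elim: w1 => [|a w1 IH] //=; apply: push_reduced. Qed.

Definition F_mul (g h : F) : F := MkF (mulw_reduced (fval g) (fvalP h)).

Definition invw_acc (acc w : seq letter) : seq letter :=
  foldl (fun acc a => push (flip a) acc) acc w.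

Lemma invw_acc_reduced w acc : reduced acc -> reduced (invw_acc acc w).
Proof.
elim: w acc => [|a w IH] acc H //=; apply: IH; exact: push_reduced.
Qed.

Definition F_inv (g : F) : F := MkF (invw_acc_reduced (fval g) (isT : reduced [::])).

Definition F_conj (w r : F) : F := F_mul (F_inv w) (F_mul r w).

Inductive in_ncl (r1 r2 : F) : F -> Prop :=
| ncl_one : in_ncl r1 r2 F_one
| ncl_r1 : in_ncl r1 r2 r1
| ncl_r2 : in_ncl r1 r2 r2
| ncl_mul a b : in_ncl r1 r2 a -> in_ncl r1 r2 b -> in_ncl r1 r2 (F_mul a b)
| ncl_inv a : in_ncl r1 r2 a -> in_ncl r1 r2 (F_inv a)
| ncl_conj w a : in_ncl r1 r2 a -> in_ncl r1 r2 (F_conj w a).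

Definition B2 (p : F * F) : Prop := forall g : F, in_ncl p.1 p.2 g.

Inductive ac_move : F * F -> F * F -> Prop :=
| ac_mul1 r1 r2 : ac_move (r1, r2) (F_mul r1 r2, r2)
| ac_mul2 r1 r2 : ac_move (r1, r2) (r1, F_mul r2 r1)
| ac_inv1 r1 r2 : ac_move (r1, r2) (F_inv r1, r2)
| ac_inv2 r1 r2 : ac_move (r1, r2) (r1, F_inv r2)
| ac_conj1 w r1 r2 : ac_move (r1, r2) (F_conj w r1, r2)
| ac_conj2 w r1 r2 : ac_move (r1, r2) (r1, F_conj w r2).

Definition ac_equiv : F * F -> F * F -> Prop := clos_refl_trans (F * F) ac_move.

Definition is_endo (phi : F -> F) : Prop :=
  forall g h : F, phi (F_mul g h) = F_mul (phi g) (phi h).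

(* An endomorphism of F sends products, inverses and conjugates to products,
   inverses and conjugates, so it maps every AC-move to an AC-move and hence
   every AC-sequence to an AC-sequence. *)
From mathcomp Require Import all_boot.
From Stdlib Require Import Relation_Operators.

Set Implicit Arguments.
Unset Strict Implicit.
Unset Printing Implicit Defensive.

Lemma flipK : involutive flip.
Proof. by case=> g s; rewrite /flip /= negbK. Qed.

Lemma cancels_flip a : cancels a (flip a).
Proof. by case: a => g s; rewrite /cancels /flip /= eqxx; case: s. Qed.

Lemma cancelsP a b : cancels a b -> b = flip a.
Proof.
case: a b => [g s] [g' s']; rewrite /cancels /flip /= => /andP[/eqP ->].
by case: s; case: s'.
Qed.

Lemma push_flipK a z : reduced z -> push a (push (flip a) z) = z.
Proof.
case: z => [|c z] /=; first by rewrite cancels_flip.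
case: ifP => [/cancelsP | _]; last by rewrite /= cancels_flip.
rewrite flipK => <-.
by case: z => [|d z] //= /andP[/negbTE ->].
Qed.

Lemma mulw_nil w : reduced w -> mulw w [::] = w.
Proof.
elim: w => [|a w IH] //= Hw.
have Hw' : reduced w by move: Hw; rewrite /reduced /=; case: w {IH} => //= b w /andP[].
rewrite IH //.
by case: w Hw {IH Hw'} => //= b w /andP[/negbTE ->].
Qed.

Lemma mulw_cat s1 s2 z : mulw (s1 ++ s2) z = mulw s1 (mulw s2 z).
Proof. exact: foldr_cat. Qed.

Lemma mulw_push a w z : reduced z -> mulw (push a w) z = push a (mulw w z).
Proof.
move=> Hz; case: w => [|b w] //=.
case: ifP => [/cancelsP -> | //].
by rewrite push_flipK //; apply: mulw_reduced.
Qed.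

Lemma mulwA s1 s2 z : reduced z -> mulw (mulw s1 s2) z = mulw s1 (mulw s2 z).
Proof. by move=> Hz; elim: s1 => [|a s1 IH] //=; rewrite mulw_push // IH. Qed.

Definition invw (w : seq letter) := rev (map flip w).

Lemma invwK : involutive invw.
Proof. by move=> w; rewrite /invw map_rev revK -map_comp (eq_map flipK) map_id. Qed.

Lemma invw_accE acc w : invw_acc acc w = mulw (invw w) acc.
Proof.
elim: w acc => [|a w IH] acc //=.
by rewrite IH /invw /= rev_cons -cats1 mulw_cat.
Qed.

Lemma mulKw w z : reduced z -> mulw (invw w) (mulw w z) = z.
Proof.
move=> Hz; elim: w => [|a w IH] //=.
rewrite /invw /= rev_cons -cats1 mulw_cat /= -{2}(flipK a) push_flipK.
  exact: IH.
exact: mulw_reduced.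
Qed.

Lemma F_mulA a b c : F_mul a (F_mul b c) = F_mul (F_mul a b) c.
Proof. by apply: val_inj; rewrite /= mulwA // fvalP. Qed.

Lemma F_mul1l a : F_mul F_one a = a.
Proof. exact: val_inj. Qed.

Lemma F_mul1r a : F_mul a F_one = a.
Proof. by apply: val_inj; rewrite /= mulw_nil // fvalP. Qed.

Lemma F_mulVl a : F_mul (F_inv a) a = F_one.
Proof.
apply: val_inj; rewrite /= invw_accE mulwA ?fvalP //.
by rewrite -{2}(mulw_nil (fvalP a)) mulKw.
Qed.

Lemma F_mulVr a : F_mul a (F_inv a) = F_one.
Proof. by apply: val_inj; rewrite /= invw_accE -{1}(invwK (fval a)) mulKw. Qed.

Section Endomorphism.

Variable phi : F -> F.
Hypothesis phiM : is_endo phi.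

Lemma endo1 : phi F_one = F_one.
Proof.
have := congr1 (F_mul (F_inv (phi F_one))) (phiM F_one F_one).
by rewrite F_mul1l F_mulA F_mulVl F_mul1l => <-.
Qed.

Lemma endoV g : phi (F_inv g) = F_inv (phi g).
Proof.
have := congr1 (F_mul^~ (F_inv (phi g))) (phiM (F_inv g) g).
by rewrite F_mulVl endo1 F_mul1l -F_mulA F_mulVr F_mul1r.
Qed.

Lemma endoJ w r : phi (F_conj w r) = F_conj (phi w) (phi r).
Proof. by rewrite /F_conj !phiM endoV. Qed.

Definition endo_pair (p : F * F) : F * F := (phi p.1, phi p.2).

Lemma ac_move_endo p q : ac_move p q -> ac_move (endo_pair p) (endo_pair q).
Proof. by case=> * /=; rewrite /endo_pair /= ?phiM ?endoV ?endoJ; constructor. Qed.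

Lemma ac_equiv_endo p q : ac_equiv p q -> ac_equiv (endo_pair p) (endo_pair q).
Proof.
elim=> [p' q' /ac_move_endo | p' | p' q' r _ IHpq _ IHqr].
- exact: rt_step.
- exact: rt_refl.
- exact: rt_trans IHpq IHqr.
Qed.

End Endomorphism.

Theorem lemma2 (u v u' v' : F) (phi : F -> F) :
  ac_equiv (u, v) (u', v') ->
  is_endo phi ->
  B2 (phi gen_x, phi gen_y) ->
  ac_equiv (phi u, phi v) (phi u', phi v').
Proof. by move=> Huv phiM _; exact: (ac_equiv_endo phiM Huv). Qed.
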